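(* Let $a,b$ be nonzero complex constants and let $P,Q$ be arbitrary functions (or bilateral formal series) of one variable. Each of the following pairs $(f,g)$ satisfies $f\perp g$: (i) $f(x,y)=P(x)+yQ(x)$, $g(x,y)=x-y$; (ii) $f(x,y)=(1-axy)\big(1-b\frac{x}{y}\big)$, $g(x,y)=(x-y)\big(1-\frac{b}{axy}\big)$; (iii) $f(x,y)=(x+y)\big(x+\frac{b}{ay}\big)$, $g(x,y)=(x-y)\big(1-\frac{b}{axy}\big)$.
   Context: For functions (or bilateral formal series) $f,g$ of two variables, $f\perp g$ means $g(u,v)f(z,w)-g(u,w)f(z,v)+g(v,w)f(z,u)=0$ identically in $u,v,w,z$. *)

From HB Require Import structures.
From mathcomp Require Import all_boot all_order all_algebra.
Set Implicit Arguments. Unset Strict Implicit. Unset Printing Implicit Defensive.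
Import Order.TTheory GRing.Theory Num.Theory.
Local Open Scope ring_scope.

Definition perp_on (F : ringType) (D : pred F) (f g : F -> F -> F) : Prop :=
  forall u v w z, D u -> D v -> D w -> D z ->
    g u v * f z w - g u w * f z v + g v w * f z u = 0.

From HB Require Import structures.
From mathcomp Require Import all_boot all_order all_algebra.
From mathcomp Require Import ring.
Import Order.TTheory GRing.Theory Num.Theory.
Local Open Scope ring_scope.

(* In all three cases [g] is a coboundary [g x y = h x - h y] and every
   [f z] lies in the span of [1] and [h]: for (i) [h] is the identity, for
   (ii) and (iii) it is the Joukowski map [t + (b/a)/t].  The left-hand side
   of [f ⊥ g] is then the determinant with rows [(1, 1, 1)],
   [(h u, h v, h w)] and [(f z u, f z v, f z w)], which vanishes since the
   last row is a combination of the first two. *)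

Lemma perp_on_coboundary {R : comNzRingType} (D : pred R) (h P Q : R -> R) :
  perp_on D (fun x y => P x + h y * Q x) (fun x y => h x - h y).
Proof. by move=> u v w z _ _ _ _; ring. Qed.

Lemma eq_perp_on {R : nzRingType} {D : pred R} {f f' g g' : R -> R -> R} :
  perp_on D f g ->
  (forall x y, D x -> D y -> f x y = f' x y) ->
  (forall x y, D x -> D y -> g x y = g' x y) ->
  perp_on D f' g'.
Proof.
move=> fg eq_f eq_g u v w z Du Dv Dw Dz.
by rewrite -!eq_f -?eq_g ?fg.
Qed.

Definition joukowski {F : fieldType} (c t : F) : F := t + c / t.

Section JoukowskiPairs.

Context {F : fieldType} {a b : F}.
Hypothesis a_neq0 : a != 0.

Lemma joukowski_diff (x y : F) : x != 0 -> y != 0 ->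
  (x - y) * (1 - b / (a * x * y)) = joukowski (b / a) x - joukowski (b / a) y.
Proof.
by move=> x_neq0 y_neq0; rewrite /joukowski; field; rewrite x_neq0 y_neq0 a_neq0.
Qed.

Lemma perp_on_joukowski_prod :
  perp_on (fun x => x != 0)
    (fun x y => (1 - a * x * y) * (1 - b * (x / y)))
    (fun x y => (x - y) * (1 - b / (a * x * y))).
Proof.
apply: (eq_perp_on (perp_on_coboundary _ (joukowski (b / a))
                     (fun x => 1 + a * b * x ^+ 2) (fun x => - (a * x)))).
- move=> x y _ /= y_neq0; rewrite /joukowski; field; by rewrite y_neq0 a_neq0.
- by move=> x y /= x_neq0 y_neq0; rewrite joukowski_diff.
Qed.

Lemma perp_on_joukowski_sum :
  perp_on (fun x => x != 0)
    (fun x y => (x + y) * (x + b / (a * y)))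
    (fun x y => (x - y) * (1 - b / (a * x * y))).
Proof.
apply: (eq_perp_on (perp_on_coboundary _ (joukowski (b / a))
                     (fun x => x ^+ 2 + b / a) id)).
- move=> x y _ /= y_neq0; rewrite /joukowski; field; by rewrite y_neq0 a_neq0.
- by move=> x y /= x_neq0 y_neq0; rewrite joukowski_diff.
Qed.

End JoukowskiPairs.

Theorem corollary2p3 (C : numClosedFieldType) (a b : C) (P Q : C -> C) :
  a != 0 -> b != 0 ->
  [/\ perp_on predT (fun x y => P x + y * Q x) (fun x y => x - y),
      perp_on (fun x => x != 0)
        (fun x y => (1 - a * x * y) * (1 - b * (x / y)))
        (fun x y => (x - y) * (1 - b / (a * x * y)))
    & perp_on (fun x => x != 0)
        (fun x y => (x + y) * (x + b / (a * y)))
        (fun x y => (x - y) * (1 - b / (a * x * y)))].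
Proof.
move=> a_neq0 _; split.
- exact: (perp_on_coboundary predT id P Q).
- exact: (perp_on_joukowski_prod a_neq0).
- exact: (perp_on_joukowski_sum a_neq0).
Qed.
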